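(* For all integers $n\ge m\ge k+1\ge 3$, $\Gamma_{\times k,t}(K_n\,\Box\,K_m)\ge kn$.
   Context: A set $S\subseteq V(G)$ is a $k$-tuple total dominating set ($k$TDS) of a graph $G$ with $\delta(G)\ge k$ if $|N_G(x)\cap S|\ge k$ for every $x\in V(G)$. The upper $k$-tuple total domination number $\Gamma_{\times k,t}(G)$ is the maximum cardinality of a minimal (with respect to inclusion) $k$TDS of $G$. The Cartesian product $G\,\Box\,H$ has vertex set $V(G)\times V(H)$, with $(g_1,h_1)\sim(g_2,h_2)$ iff either $g_1=g_2$ and $h_1h_2\in E(H)$, or $h_1=h_2$ and $g_1g_2\in E(G)$. *)

From mathcomp Require Import all_boot.
Set Implicit Arguments. Unset Strict Implicit. Unset Printing Implicit Defensive.

(* Simple graphs are given by an adjacency relation [e : rel T] on a finType T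
   (symmetric and irreflexive for the graphs used here). *)

Definition nbhd (T : finType) (e : rel T) (x : T) : {set T} := [set y | e x y].

Definition is_kTDS (T : finType) (e : rel T) (k : nat) (S : {set T}) : bool :=
  [forall x, k <= #|nbhd e x :&: S|].

Definition is_min_kTDS (T : finType) (e : rel T) (k : nat) (S : {set T}) : bool :=
  is_kTDS e k S && [forall S' : {set T}, (S' \proper S) ==> ~~ is_kTDS e k S'].

Definition upper_ktuple_tdom (T : finType) (e : rel T) (k : nat) : nat :=
  \max_(S : {set T} | is_min_kTDS e k S) #|S|.

Definition complete_rel (n : nat) : rel 'I_n := fun x y => x != y.

Definition cart_rel (A B : finType) (eA : rel A) (eB : rel B) : rel (A * B) :=
  fun u v => ((u.1 == v.1) && eB u.2 v.2) || ((u.2 == v.2) && eA u.1 v.1).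

From mathcomp Require Import all_boot.
From mathcomp Require Import zify.
Set Implicit Arguments. Unset Strict Implicit. Unset Printing Implicit Defensive.

(* Take S = K_n x C, the union of k columns C of the n x m grid.  A vertex in a
   column of C has its n - 1 >= k column-mates in S; a vertex outside C sees
   exactly the k vertices of S in its row.  Removing any (a, c) from S thus
   leaves the vertex (a, b), b outside C, with only k - 1 neighbours, so S is a
   minimal kTDS of size kn. *)

Lemma leq_upper_ktuple_tdom (T : finType) (e : rel T) (k : nat) (S : {set T}) :
  is_min_kTDS e k S -> #|S| <= upper_ktuple_tdom e k.
Proof. exact: (leq_bigmax_cond (F := fun S0 : {set T} => #|S0|)). Qed.

Lemma card_set_ord_ltn (m k : nat) : k <= m -> #|[set j : 'I_m | j < k]| = k.
Proof.
move=> le_km.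
have -> : [set j : 'I_m | j < k] = widen_ord le_km @: [set: 'I_k].
  apply/setP => j; rewrite inE; apply/idP/imsetP => [lt_jk | [i _ ->]].
    by exists (Ordinal lt_jk) => //; apply: val_inj.
  by rewrite /= ltn_ord.
rewrite card_imset ?cardsT ?card_ord // => i i' /(congr1 val) eq_ii'.
exact: val_inj.
Qed.

Section ColumnStripe.

Variables (n m k : nat) (C : {set 'I_m}).

Let e := cart_rel (@complete_rel n) (@complete_rel m).
Let S : {set 'I_n * 'I_m} := setX [set: 'I_n] C.

Lemma in_nbhd_cart_complete (u v : 'I_n * 'I_m) :
  (v \in nbhd e u) =
  ((u.1 == v.1) && (u.2 != v.2)) || ((u.2 == v.2) && (u.1 != v.1)).
Proof. by rewrite inE. Qed.

Lemma column_sub_nbhd_stripe (u : 'I_n * 'I_m) :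
  u.2 \in C -> setX [set~ u.1] [set u.2] \subset nbhd e u :&: S.
Proof.
case: u => a b /= Cb; apply/subsetP => -[i j].
rewrite in_setI in_nbhd_cart_complete !inE /= => /andP [ne_ia /eqP ->].
by rewrite Cb eq_sym ne_ia eqxx orbT.
Qed.

Lemma nbhd_stripe_notin (u : 'I_n * 'I_m) :
  u.2 \notin C -> nbhd e u :&: S = setX [set u.1] C.
Proof.
case: u => a b /= notCb; apply/setP => -[i j].
rewrite in_setI in_nbhd_cart_complete !inE /=.
case: (eqVneq b j) => [<- | ne_bj]; first by rewrite (negbTE notCb) !andbF.
by rewrite andbT orbF eq_sym.
Qed.

Lemma card_nbhd_stripe_notin (u : 'I_n * 'I_m) :
  u.2 \notin C -> #|nbhd e u :&: S| = #|C|.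
Proof. by move=> notCu; rewrite nbhd_stripe_notin // cardsX cards1 mul1n. Qed.

Lemma stripe_kTDS : k <= #|C| -> k < n -> is_kTDS e k S.
Proof.
move=> le_kC lt_kn; apply/forallP => u.
case: (boolP (u.2 \in C)) => [Cu | notCu]; last by rewrite card_nbhd_stripe_notin.
apply: leq_trans (subset_leq_card (column_sub_nbhd_stripe Cu)).
by rewrite cardsX cardsC1 cards1 card_ord muln1; lia.
Qed.

Lemma stripe_min_kTDS (b : 'I_m) :
  #|C| = k -> b \notin C -> k < n -> is_min_kTDS e k S.
Proof.
move=> card_C notCb lt_kn; rewrite /is_min_kTDS stripe_kTDS ?card_C //=.
apply/forallP => S'; apply/implyP => /properP [sub_S'S [[a c] Sac notS'ac]].
apply/negP => /forallP /(_ (a, b)).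
have N_ac : (a, c) \in nbhd e (a, b) :&: S.
  by rewrite nbhd_stripe_notin //; move: Sac; rewrite !inE eqxx.
have sub_N : nbhd e (a, b) :&: S' \subset (nbhd e (a, b) :&: S) :\ (a, c).
  apply/subsetP => v; rewrite in_setD1 !in_setI => /andP [Nv S'v].
  rewrite Nv (subsetP sub_S'S) // !andbT.
  by apply: contraNneq notS'ac => <-.
have := subset_leq_card sub_N.
have := cardsD1 (a, c) (nbhd e (a, b) :&: S).
rewrite N_ac card_nbhd_stripe_notin // card_C; lia.
Qed.

End ColumnStripe.

Theorem mainTheorem8 (n m k : nat) :
  2 <= k -> k + 1 <= m -> m <= n ->
  k * n <= upper_ktuple_tdom (cart_rel (@complete_rel n) (@complete_rel m)) k.
Proof.
move=> _ le_k1m le_mn.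
have lt_km : k < m by lia.
set C := [set j : 'I_m | j < k].
have card_C : #|C| = k by apply: card_set_ord_ltn; lia.
have notCb : Ordinal lt_km \notin C by rewrite inE /= ltnn.
have := leq_upper_ktuple_tdom (stripe_min_kTDS card_C notCb (leq_trans lt_km le_mn)).
by rewrite cardsX cardsT card_ord card_C mulnC.
Qed.
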